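(* Let $a=\sum_{t=0}^7a_te_t\in C\ell_{1,2}$. Then its Moore–Penrose inverse is $$a^+=\begin{cases}0, & \text{if } a=0;\\[2pt] \dfrac{N(a)-2T(a)e_7}{P(a)}\,\bar a, & \text{if } P(a)\neq 0;\\[6pt] \dfrac{a'}{4(a_0^2+a_2^2+a_4^2+a_6^2)}, & \text{if } a\neq 0 \text{ and } P(a)=0.\end{cases}$$
   Context: $C\ell_{1,2}$ is the real Clifford algebra generated by $i_1,i_2,i_3$ with $i_1^2=1$, $i_2^2=i_3^2=-1$ and $i_ti_m=-i_mi_t$ for $t\neq m$, with real basis $e_0=1$, $e_1=i_1$, $e_2=i_2$, $e_3=i_1i_2$, $e_4=i_3$, $e_5=i_1i_3$, $e_6=i_2i_3$, $e_7=i_1i_2i_3$. For $a=\sum_{t=0}^7 a_te_t$ ($a_t\in\mathbb{R}$) define: the conjugate $\bar a=a_0-a_1e_1-a_2e_2-a_3e_3-a_4e_4-a_5e_5-a_6e_6+a_7e_7$; the prime $a'=a_0+a_1e_1-a_2e_2+a_3e_3-a_4e_4+a_5e_5-a_6e_6-a_7e_7$; $N(a)=a_0^2-a_1^2+a_2^2-a_3^2+a_4^2-a_5^2+a_6^2-a_7^2$; $T(a)=a_0a_7+a_2a_5-a_1a_6-a_3a_4$; $P(a)=N(a)^2+4T(a)^2$. For every $a\in C\ell_{1,2}$ there is a unique $x\in C\ell_{1,2}$ with $axa=a$, $xax=x$, $(ax)'=ax$, $(xa)'=xa$; it is called the Moore–Penrose inverse of $a$ and denoted $a^+$. *)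

From HB Require Import structures.
From mathcomp Require Import all_boot all_order all_algebra.
Set Implicit Arguments. Unset Strict Implicit. Unset Printing Implicit Defensive.
Import Order.TTheory GRing.Theory Num.Theory.
Local Open Scope ring_scope.

(* Basis index t in 'I_8, written in binary t = b0 + 2 b1 + 4 b2,
   stands for e_t = i1^b0 i2^b1 i3^b2 :
   e0=1, e1=i1, e2=i2, e3=i1i2, e4=i3, e5=i1i3, e6=i2i3, e7=i1i2i3. *)
Definition bitn (n j : nat) : bool := odd (n %/ 2 ^ j).

(* index of the blade e_s e_t (symmetric difference of generator sets) *)
Definition xorn3 (s t : nat) : nat := (\sum_(j < 3) (bitn s j != bitn t j) * 2 ^ j)%N.

(* number of transpositions needed to sort e_s e_t *)
Definition swapsn (s t : nat) : nat :=
  (\sum_(j < 3) \sum_(i < 3) ((j < i) && bitn t j && bitn s i))%N.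

(* common generators squaring to -1 : i2 (bit 1) and i3 (bit 2); i1^2 = 1 *)
Definition negsqn (s t : nat) : nat :=
  ((bitn s 1 && bitn t 1) + (bitn s 2 && bitn t 2))%N.

Notation cl R := {ffun 'I_8 -> R}.

Section Cl12.
Variable R : realFieldType.

Definition clzero : cl R := [ffun => 0].
Definition cladd (a b : cl R) : cl R := [ffun i => a i + b i].
Definition clopp (a : cl R) : cl R := [ffun i => - a i].
Definition clscale (k : R) (a : cl R) : cl R := [ffun i => k * a i].

Definition clc (a : cl R) (k : nat) : R := a (inord k).

Definition ebase (k : nat) : cl R := [ffun i : 'I_8 => ((i : nat) == k)%:R].

Definition clmul (a b : cl R) : cl R :=
  [ffun k : 'I_8 => \sum_(s < 8) \sum_(t < 8)
     (if xorn3 s t == k then (-1) ^+ (swapsn s t + negsqn s t) * a s * b t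
      else 0)].

Definition clbar (a : cl R) : cl R :=
  [ffun i : 'I_8 => (if ((i : nat) == 0%N) || ((i : nat) == 7%N) then 1 else -1) * a i].

Definition clprime (a : cl R) : cl R :=
  [ffun i : 'I_8 => (if (i : nat) \in [:: 0; 1; 3; 5]%N then 1 else -1) * a i].

Definition clN (a : cl R) : R :=
  clc a 0 ^+ 2 - clc a 1 ^+ 2 + clc a 2 ^+ 2 - clc a 3 ^+ 2
  + clc a 4 ^+ 2 - clc a 5 ^+ 2 + clc a 6 ^+ 2 - clc a 7 ^+ 2.

Definition clT (a : cl R) : R :=
  clc a 0 * clc a 7 + clc a 2 * clc a 5
  - clc a 1 * clc a 6 - clc a 3 * clc a 4.

Definition clP (a : cl R) : R := clN a ^+ 2 + 4 * clT a ^+ 2.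

Definition is_MP_inverse (a x : cl R) : Prop :=
  [/\ clmul (clmul a x) a = a,
      clmul (clmul x a) x = x,
      clprime (clmul a x) = clmul a x
    & clprime (clmul x a) = clmul x a].

End Cl12.

(* Cl_{1,2} behaves like the algebra of complex 2x2 matrices: e7 is central
   with e7^2 = -1, the prime is the conjugate transpose (an involutive
   anti-automorphism), and a bar(a) = bar(a) a = N(a) + 2 T(a) e7 plays the
   role of the determinant, with P(a) = N(a)^2 + 4 T(a)^2 its squared modulus.
   If P(a) <> 0, then (N - 2T e7) bar(a) / P is a two-sided inverse of a,
   hence its Moore-Penrose inverse.  If P(a) = 0 then N(a) = T(a) = 0, and
   the identity a a' a = 2|a|^2 a - (a bar(a)) bar(a)' collapses to
   a a' a = 4 s a with s = a0^2 + a2^2 + a4^2 + a6^2 (as N = 0 means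
   |a|^2 = 2 s, so s <> 0 for a <> 0); the Penrose equations for a'/(4 s)
   then follow from the anti-automorphism property of the prime. *)

From HB Require Import structures.
From mathcomp Require Import all_boot all_order all_algebra.
From mathcomp Require Import ring.
Import Order.TTheory GRing.Theory Num.Theory.
Local Open Scope ring_scope.

Definition xorn3_table : seq (seq nat) :=
  [:: [:: 0; 1; 2; 3; 4; 5; 6; 7]; [:: 1; 0; 3; 2; 5; 4; 7; 6];
      [:: 2; 3; 0; 1; 6; 7; 4; 5]; [:: 3; 2; 1; 0; 7; 6; 5; 4];
      [:: 4; 5; 6; 7; 0; 1; 2; 3]; [:: 5; 4; 7; 6; 1; 0; 3; 2];
      [:: 6; 7; 4; 5; 2; 3; 0; 1]; [:: 7; 6; 5; 4; 3; 2; 1; 0]]%N.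

Definition clsign_table : seq (seq bool) :=
  [:: [:: false; false; false; false; false; false; false; false];
      [:: false; false; false; false; false; false; false; false];
      [:: false; true; true; false; false; true; true; false];
      [:: false; true; true; false; false; true; true; false];
      [:: false; true; true; false; true; false; false; true];
      [:: false; true; true; false; true; false; false; true];
      [:: false; false; false; false; true; true; true; true];
      [:: false; false; false; false; true; true; true; true]].

Lemma xorn3E (s t : 'I_8) : xorn3 s t = nth 0%N (nth [::] xorn3_table s) t.
Proof.
case: s t => [[|[|[|[|[|[|[|[|s]]]]]]]] hs] [[|[|[|[|[|[|[|[|t]]]]]]]] ht] //=;
  by rewrite /xorn3 !big_ord_recr big_ord0.
Qed.

Lemma odd_clsignE (s t : 'I_8) :
  odd (swapsn s t + negsqn s t) = nth false (nth [::] clsign_table s) t.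
Proof.
case: s t => [[|[|[|[|[|[|[|[|s]]]]]]]] hs] [[|[|[|[|[|[|[|[|t]]]]]]]] ht] //=;
  by rewrite /swapsn /negsqn !big_ord_recr !big_ord0.
Qed.

Section Cl12.
Context {R : realFieldType}.
Implicit Types (a b c : cl R).

Definition clvec (x0 x1 x2 x3 x4 x5 x6 x7 : R) : cl R :=
  [ffun i : 'I_8 => nth 0 [:: x0; x1; x2; x3; x4; x5; x6; x7] i].

Lemma clvec_ind (P : cl R -> Prop) :
  (forall x0 x1 x2 x3 x4 x5 x6 x7, P (clvec x0 x1 x2 x3 x4 x5 x6 x7)) ->
  forall a, P a.
Proof.
move=> Pvec a; suff -> : a = clvec (clc a 0) (clc a 1) (clc a 2) (clc a 3)
  (clc a 4) (clc a 5) (clc a 6) (clc a 7) by [].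
apply/ffunP => -[[|[|[|[|[|[|[|[|i]]]]]]]] hi] //; rewrite ffunE /clc /=;
  by congr (a _); apply: val_inj; rewrite /= inordK.
Qed.

Lemma eq_clvec (x0 x1 x2 x3 x4 x5 x6 x7 y0 y1 y2 y3 y4 y5 y6 y7 : R) :
  x0 = y0 -> x1 = y1 -> x2 = y2 -> x3 = y3 ->
  x4 = y4 -> x5 = y5 -> x6 = y6 -> x7 = y7 ->
  clvec x0 x1 x2 x3 x4 x5 x6 x7 = clvec y0 y1 y2 y3 y4 y5 y6 y7.
Proof. by move=> -> -> -> -> -> -> -> ->. Qed.

Ltac case_I8 := apply/ffunP => -[[|[|[|[|[|[|[|[|?]]]]]]]] ?]; rewrite !ffunE.

Lemma clc_vec (x0 x1 x2 x3 x4 x5 x6 x7 : R) (k : nat) : (k < 8)%N ->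
  clc (clvec x0 x1 x2 x3 x4 x5 x6 x7) k = nth 0 [:: x0; x1; x2; x3; x4; x5; x6; x7] k.
Proof. by move=> lt_k8; rewrite /clc ffunE inordK. Qed.

Lemma clmul_vec (a0 a1 a2 a3 a4 a5 a6 a7 b0 b1 b2 b3 b4 b5 b6 b7 : R) :
  clmul (clvec a0 a1 a2 a3 a4 a5 a6 a7) (clvec b0 b1 b2 b3 b4 b5 b6 b7) =
  clvec
   (a0 * b0 + a1 * b1 - a2 * b2 + a3 * b3 - a4 * b4 + a5 * b5 - a6 * b6 - a7 * b7)
   (a0 * b1 + a1 * b0 + a2 * b3 - a3 * b2 + a4 * b5 - a5 * b4 - a6 * b7 - a7 * b6)
   (a0 * b2 + a1 * b3 + a2 * b0 - a3 * b1 + a4 * b6 - a5 * b7 - a6 * b4 - a7 * b5)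
   (a0 * b3 + a1 * b2 - a2 * b1 + a3 * b0 - a4 * b7 + a5 * b6 - a6 * b5 - a7 * b4)
   (a0 * b4 + a1 * b5 - a2 * b6 + a3 * b7 + a4 * b0 - a5 * b1 + a6 * b2 + a7 * b3)
   (a0 * b5 + a1 * b4 + a2 * b7 - a3 * b6 - a4 * b1 + a5 * b0 + a6 * b3 + a7 * b2)
   (a0 * b6 + a1 * b7 + a2 * b4 - a3 * b5 - a4 * b2 + a5 * b3 + a6 * b0 + a7 * b1)
   (a0 * b7 + a1 * b6 - a2 * b5 + a3 * b4 + a4 * b3 - a5 * b2 + a6 * b1 + a7 * b0).
Proof.
apply/ffunP => k; rewrite !ffunE.
under eq_bigr => s _ do under eq_bigr => t _ do
  rewrite xorn3E -signr_odd odd_clsignE.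
rewrite !big_ord_recl !big_ord0 !ffunE /=.
by case: k => [[|[|[|[|[|[|[|[|k]]]]]]]] hk] //=; ring.
Qed.

Lemma clzero_vec : clzero R = clvec 0 0 0 0 0 0 0 0.
Proof. by case_I8. Qed.

Lemma ebase0_vec : ebase R 0 = clvec 1 0 0 0 0 0 0 0.
Proof. by case_I8. Qed.

Lemma ebase7_vec : ebase R 7 = clvec 0 0 0 0 0 0 0 1.
Proof. by case_I8. Qed.

Lemma clscale_vec k (x0 x1 x2 x3 x4 x5 x6 x7 : R) :
  clscale k (clvec x0 x1 x2 x3 x4 x5 x6 x7) =
  clvec (k * x0) (k * x1) (k * x2) (k * x3) (k * x4) (k * x5) (k * x6) (k * x7).
Proof. by case_I8. Qed.

Lemma cladd_vec (x0 x1 x2 x3 x4 x5 x6 x7 y0 y1 y2 y3 y4 y5 y6 y7 : R) :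
  cladd (clvec x0 x1 x2 x3 x4 x5 x6 x7) (clvec y0 y1 y2 y3 y4 y5 y6 y7) =
  clvec (x0 + y0) (x1 + y1) (x2 + y2) (x3 + y3)
        (x4 + y4) (x5 + y5) (x6 + y6) (x7 + y7).
Proof. by case_I8. Qed.

Lemma clopp_vec (x0 x1 x2 x3 x4 x5 x6 x7 : R) :
  clopp (clvec x0 x1 x2 x3 x4 x5 x6 x7) =
  clvec (- x0) (- x1) (- x2) (- x3) (- x4) (- x5) (- x6) (- x7).
Proof. by case_I8. Qed.

Lemma clbar_vec (x0 x1 x2 x3 x4 x5 x6 x7 : R) :
  clbar (clvec x0 x1 x2 x3 x4 x5 x6 x7) =
  clvec x0 (- x1) (- x2) (- x3) (- x4) (- x5) (- x6) x7.
Proof. by case_I8; rewrite /= ?mul1r ?mulN1r. Qed.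

Lemma clprime_vec (x0 x1 x2 x3 x4 x5 x6 x7 : R) :
  clprime (clvec x0 x1 x2 x3 x4 x5 x6 x7) =
  clvec x0 x1 (- x2) x3 (- x4) x5 (- x6) (- x7).
Proof. by case_I8; rewrite /= ?mul1r ?mulN1r. Qed.

Ltac clvec_simpl :=
  repeat progress rewrite ?clzero_vec ?ebase0_vec ?ebase7_vec ?clscale_vec
    ?cladd_vec ?clopp_vec ?clbar_vec ?clprime_vec ?clmul_vec.

Lemma clmulA : associative (@clmul R).
Proof.
move=> a b c; elim/clvec_ind: a => a0 a1 a2 a3 a4 a5 a6 a7.
elim/clvec_ind: b => b0 b1 b2 b3 b4 b5 b6 b7.
elim/clvec_ind: c => c0 c1 c2 c3 c4 c5 c6 c7.
by clvec_simpl; apply: eq_clvec; ring.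
Qed.

Lemma clmul1l : left_id (ebase R 0) (@clmul R).
Proof.
elim/clvec_ind => a0 a1 a2 a3 a4 a5 a6 a7.
by clvec_simpl; apply: eq_clvec; ring.
Qed.

Lemma clscaleA k m a : clscale k (clscale m a) = clscale (k * m) a.
Proof. by apply/ffunP => i; rewrite !ffunE mulrA. Qed.

Lemma clscale1 a : clscale 1 a = a.
Proof. by apply/ffunP => i; rewrite ffunE mul1r. Qed.

Lemma clmulZl k a b : clmul (clscale k a) b = clscale k (clmul a b).
Proof.
elim/clvec_ind: a => a0 a1 a2 a3 a4 a5 a6 a7.
elim/clvec_ind: b => b0 b1 b2 b3 b4 b5 b6 b7.
by clvec_simpl; apply: eq_clvec; ring.
Qed.

Lemma clmulZr k a b : clmul a (clscale k b) = clscale k (clmul a b).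
Proof.
elim/clvec_ind: a => a0 a1 a2 a3 a4 a5 a6 a7.
elim/clvec_ind: b => b0 b1 b2 b3 b4 b5 b6 b7.
by clvec_simpl; apply: eq_clvec; ring.
Qed.

Lemma clprimeZ k a : clprime (clscale k a) = clscale k (clprime a).
Proof.
elim/clvec_ind: a => a0 a1 a2 a3 a4 a5 a6 a7.
by clvec_simpl; apply: eq_clvec; ring.
Qed.

Lemma clprimeK : involutive (@clprime R).
Proof.
elim/clvec_ind => a0 a1 a2 a3 a4 a5 a6 a7.
by clvec_simpl; apply: eq_clvec; ring.
Qed.

Lemma clprime1 : clprime (ebase R 0) = ebase R 0.
Proof. by clvec_simpl; apply: eq_clvec; ring. Qed.

Lemma clprime_mul a b : clprime (clmul a b) = clmul (clprime b) (clprime a).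
Proof.
elim/clvec_ind: a => a0 a1 a2 a3 a4 a5 a6 a7.
elim/clvec_ind: b => b0 b1 b2 b3 b4 b5 b6 b7.
by clvec_simpl; apply: eq_clvec; ring.
Qed.

Definition clcentral (u v : R) : cl R := clvec u 0 0 0 0 0 0 v.

Lemma clmul_centralC u v a :
  clmul a (clcentral u v) = clmul (clcentral u v) a.
Proof.
elim/clvec_ind: a => a0 a1 a2 a3 a4 a5 a6 a7.
by clvec_simpl; apply: eq_clvec; ring.
Qed.

Lemma clmul_central u v u' v' :
  clmul (clcentral u v) (clcentral u' v') =
  clcentral (u * u' - v * v') (u * v' + v * u').
Proof. by clvec_simpl; apply: eq_clvec; ring. Qed.

Lemma clmul_clbar a : clmul a (clbar a) = clcentral (clN a) (2 * clT a).
Proof.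
elim/clvec_ind: a => a0 a1 a2 a3 a4 a5 a6 a7.
by rewrite /clN /clT !clc_vec //=; clvec_simpl; apply: eq_clvec; ring.
Qed.

Lemma clmul_clbarl a : clmul (clbar a) a = clcentral (clN a) (2 * clT a).
Proof.
elim/clvec_ind: a => a0 a1 a2 a3 a4 a5 a6 a7.
by rewrite /clN /clT !clc_vec //=; clvec_simpl; apply: eq_clvec; ring.
Qed.

Lemma is_MP_inverse_unit a x :
  clmul a x = ebase R 0 -> clmul x a = ebase R 0 -> is_MP_inverse a x.
Proof. by move=> ax1 xa1; split; rewrite ?ax1 ?xa1 ?clmul1l ?clprime1. Qed.

Lemma is_MP_inverse_central_clbar a u v :
  clmul (clcentral u v) (clcentral (clN a) (2 * clT a)) = ebase R 0 ->
  is_MP_inverse a (clmul (clcentral u v) (clbar a)).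
Proof.
move=> cz1; apply: is_MP_inverse_unit.
  by rewrite clmulA clmul_centralC -clmulA clmul_clbar.
by rewrite -clmulA clmul_clbarl.
Qed.

Lemma is_MP_inverse_scaled_prime a m :
  m != 0 -> clmul (clmul a (clprime a)) a = clscale m a ->
  is_MP_inverse a (clscale m^-1 (clprime a)).
Proof.
move=> m_neq0 aa'a.
have a'aa' : clmul (clmul (clprime a) a) (clprime a) = clscale m (clprime a).
  by have := congr1 (@clprime R) aa'a; rewrite clprimeZ !clprime_mul clprimeK clmulA.
split.
- by rewrite clmulZr clmulZl aa'a clscaleA mulVf // clscale1.
- by rewrite clmulZl clmulZl clmulZr a'aa' !clscaleA mulrAC mulVf ?mul1r.
- by rewrite clmulZr clprimeZ clprime_mul clprimeK.
- by rewrite clmulZl clprimeZ clprime_mul clprimeK.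
Qed.

Definition clnorm2 a : R := \sum_(i < 8) a i ^+ 2.

Lemma clnorm2_vec (x0 x1 x2 x3 x4 x5 x6 x7 : R) :
  clnorm2 (clvec x0 x1 x2 x3 x4 x5 x6 x7) =
  x0 ^+ 2 + x1 ^+ 2 + x2 ^+ 2 + x3 ^+ 2 + x4 ^+ 2 + x5 ^+ 2 + x6 ^+ 2 + x7 ^+ 2.
Proof. by rewrite /clnorm2 !big_ord_recl big_ord0 !ffunE /=; ring. Qed.

Lemma clnorm2_eq0 a : clnorm2 a = 0 -> a = clzero R.
Proof.
move=> a0; apply/ffunP => i; rewrite ffunE; apply/eqP; rewrite -sqrf_eq0.
by apply/eqP; apply: (psumr_eq0P _ a0) => // j _; exact: sqr_ge0.
Qed.

Lemma clnorm2_clN a :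
  clnorm2 a = 2 * (clc a 0 ^+ 2 + clc a 2 ^+ 2 + clc a 4 ^+ 2 + clc a 6 ^+ 2) - clN a.
Proof.
elim/clvec_ind: a => a0 a1 a2 a3 a4 a5 a6 a7.
by rewrite clnorm2_vec /clN !clc_vec //=; ring.
Qed.

(* In M_2(C): A A^* A = |A|^2 A - det(A) adj(A)^*. *)
Lemma clmul_prime_sandwich a :
  clmul (clmul a (clprime a)) a =
  cladd (clscale (2 * clnorm2 a) a)
        (clopp (clmul (clmul a (clbar a)) (clprime (clbar a)))).
Proof.
elim/clvec_ind: a => a0 a1 a2 a3 a4 a5 a6 a7.
by rewrite clnorm2_vec; clvec_simpl; apply: eq_clvec; ring.
Qed.

Lemma clmul_prime_sandwich_singular a :
  clN a = 0 -> clT a = 0 ->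
  clmul (clmul a (clprime a)) a = clscale (2 * clnorm2 a) a.
Proof.
move=> N0 T0; rewrite clmul_prime_sandwich clmul_clbar N0 T0.
move: (clprime _) (clnorm2 a) => b k.
elim/clvec_ind: a {N0 T0} => a0 a1 a2 a3 a4 a5 a6 a7.
elim/clvec_ind: b => b0 b1 b2 b3 b4 b5 b6 b7.
by rewrite /clcentral; clvec_simpl; apply: eq_clvec; ring.
Qed.

Lemma clP_eq0 a : clP a = 0 -> clN a = 0 /\ clT a = 0.
Proof.
move/eqP; rewrite /clP paddr_eq0 ?sqr_ge0 ?(mulr_ge0 (ler0n _ 4) (sqr_ge0 _)) //.
by rewrite sqrf_eq0 mulf_eq0 pnatr_eq0 sqrf_eq0 /= => /andP[/eqP-> /eqP->].
Qed.

Lemma clc_even_sqr_neq0 a :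
  a != clzero R -> clN a = 0 ->
  clc a 0 ^+ 2 + clc a 2 ^+ 2 + clc a 4 ^+ 2 + clc a 6 ^+ 2 != 0.
Proof.
move=> a_neq0 N0; apply: contra_neq a_neq0 => s0.
by apply: clnorm2_eq0; rewrite clnorm2_clN N0 s0 mulr0 subr0.
Qed.

Lemma is_MP_inverse0 : is_MP_inverse (clzero R) (clzero R).
Proof. by split; clvec_simpl; apply: eq_clvec; ring. Qed.

End Cl12.

Theorem theorem3p1 (R : realFieldType) (a : cl R) :
  [/\ a = clzero R -> is_MP_inverse a (clzero R),
      clP a != 0 ->
        is_MP_inverse a
          (clmul (clscale (clP a)^-1
                    (cladd (clscale (clN a) (ebase R 0))
                           (clopp (clscale (2 * clT a) (ebase R 7)))))
                 (clbar a))
    & a != clzero R -> clP a = 0 ->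
        is_MP_inverse a
          (clscale (4 * (clc a 0 ^+ 2 + clc a 2 ^+ 2 + clc a 4 ^+ 2
                         + clc a 6 ^+ 2))^-1 (clprime a))].
Proof.
split.
- by move=> ->; exact: is_MP_inverse0.
- move=> P_neq0.
  set c := clscale _ _.
  have -> : c = clcentral ((clP a)^-1 * clN a) ((clP a)^-1 * - (2 * clT a)).
    rewrite /c /clcentral ebase0_vec ebase7_vec !clscale_vec clopp_vec cladd_vec.
    by rewrite clscale_vec; apply: eq_clvec; ring.
  apply: is_MP_inverse_central_clbar.
  rewrite clmul_central /clcentral ebase0_vec /clP in P_neq0 *.
  by apply: eq_clvec => //; field.
- move=> a_neq0 /clP_eq0[N0 T0].
  apply: is_MP_inverse_scaled_prime.
    by rewrite mulf_neq0 ?pnatr_eq0 ?clc_even_sqr_neq0.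
  by rewrite clmul_prime_sandwich_singular // clnorm2_clN N0; congr clscale; ring.
Qed.
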